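(* Let $(X,\rho_X)$ be a symmetric rack, $(A,\phi,\psi,\eta)$ a constant-coefficient $(X,\rho_X)$-module, and $\alpha\in Z^2_{SR}((X,\rho_X);A)$. Then $$\operatorname{Im}(\Gamma)=\big(\operatorname{Aut}(X,\rho_X)\times\operatorname{Aut}(A)\big)_{[\alpha]}=\Lambda_{[\alpha]}^{-1}(0),$$ where $0$ is the identity element of $H^2_{SR}((X,\rho_X);A)$.
   Context: A rack is a set $X$ with binary operation $*$ such that each $x\mapsto x*y$ is bijective (inverse $x\mapsto x*^{-1}y$) and $(x*y)*z=(x*z)*(y*z)$. A symmetric rack $(X,\rho_X)$ is a rack with $\rho_X:X\to X$ such that $\rho_X^2=\mathrm{id}$, $\rho_X(x*y)=\rho_X(x)*y$, $x*\rho_X(y)=x*^{-1}y$. $\operatorname{Aut}(X,\rho_X)$: bijections preserving $*$ and commuting with $\rho_X$. A constant-coefficient $(X,\rho_X)$-module $\mathcal F=(A,\phi,\psi,\eta)$: an abelian group $A$ with group automorphism $\phi$ and endomorphisms $\psi,\eta$ satisfying $\phi\psi=\psi\phi$, $\eta^2=\mathrm{id}$, $\eta\phi=\phi\eta$, $\eta\psi=\psi$, $\phi^2=\mathrm{id}$, $\psi=\phi\psi+\psi^2$, $\phi\psi\eta=-\psi$. $\operatorname{Aut}(A)$: group automorphisms of $A$ commuting with $\phi,\psi,\eta$. $Z^2_{SR}((X,\rho_X);A)$: abelian group of maps $\sigma:X\times X\to A$ with, for all $x,y,z$: $-\phi\sigma(x,z)+\phi\sigma(x,y)+\sigma(x*y,z)-\sigma(x*z,y*z)-\psi\sigma(y,z)=0$,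 $\eta\sigma(x,y)=\sigma(\rho_X(x),y)$, $\phi\sigma(x*y,\rho_X(y))+\sigma(x,y)=0$. $B^2_{SR}$: maps $(x,y)\mapsto\phi\lambda(x)-\lambda(x*y)+\psi\lambda(y)$ with $\lambda:X\to A$ satisfying $\eta\lambda(x)=\lambda(\rho_X(x))$. $H^2_{SR}=Z^2_{SR}/B^2_{SR}$. The group $\operatorname{Aut}(X,\rho_X)\times\operatorname{Aut}(A)$ acts on $Z^2_{SR}$ and on $H^2_{SR}$ by ${}^{(\zeta,\theta)}\sigma(x,y)=\theta(\sigma(\zeta^{-1}(x),\zeta^{-1}(y)))$ and ${}^{(\zeta,\theta)}[\sigma]=[{}^{(\zeta,\theta)}\sigma]$. $\big(\operatorname{Aut}(X,\rho_X)\times\operatorname{Aut}(A)\big)_{[\alpha]}$ is the stabilizer $\{(\zeta,\theta)\mid {}^{(\zeta,\theta)}[\alpha]=[\alpha]\}$. $\Lambda_{[\alpha]}:\operatorname{Aut}(X,\rho_X)\times\operatorname{Aut}(A)\to H^2_{SR}$ is the map $\Lambda_{[\alpha]}(\zeta,\theta)=[\alpha]-{}^{(\zeta,\theta)}[\alpha]$ (the unique element whose addition to ${}^{(\zeta,\theta)}[\alpha]$ gives $[\alpha]$). $E(\mathcal F,\alpha)$ is the symmetric rack on $X\times A$ with $(x,a)*(y,b)=(x*y,\phi(a)+\psi(b)+\alpha(x,y))$ and $\rho_{E(\mathcal F,\alpha)}(x,a)=(\rho_X(x),\eta(a))$. $\operatorname{Aut}_A(E(\mathcal F,\alpha),\rho_{E(\mathcal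 F,\alpha)})$ is the group of symmetric rack automorphisms $\xi$ of it of the form $\xi(x,s)=(\zeta(x),\lambda(x)+\theta(s))$ with $(\zeta,\theta)\in\operatorname{Aut}(X,\rho_X)\times\operatorname{Aut}(A)$ and $\lambda:X\to A$ a map; $\Gamma:\operatorname{Aut}_A(E(\mathcal F,\alpha),\rho_{E(\mathcal F,\alpha)})\to\operatorname{Aut}(X,\rho_X)\times\operatorname{Aut}(A)$ is the group homomorphism $\Gamma(\xi)=(\zeta,\theta)$. *)

From mathcomp Require Import all_boot all_order all_algebra.
Set Implicit Arguments. Unset Strict Implicit. Unset Printing Implicit Defensive.
Import GRing.Theory.
Local Open Scope ring_scope.

(* A rack (X, op) presented with its inverse operation *^{-1}:
   x *^{-1} y is the (unique) inverse of (. * y) applied to x. *)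
Definition is_rack (X : Type) (op opinv : X -> X -> X) : Prop :=
  (forall x y, op (opinv x y) y = x) /\
  (forall x y, opinv (op x y) y = x) /\
  (forall x y z, op (op x y) z = op (op x z) (op y z)).

Definition is_symmetric_rack (X : Type) (op opinv : X -> X -> X) (rho : X -> X) : Prop :=
  is_rack op opinv /\
  (forall x, rho (rho x) = x) /\
  (forall x y, rho (op x y) = op (rho x) y) /\
  (forall x y, op x (rho y) = opinv x y).

Definition is_hom (A : zmodType) (f : A -> A) : Prop :=
  forall a b, f (a + b) = f a + f b.

Definition is_cc_module (A : zmodType) (phi psi eta : A -> A) : Prop :=
  [/\ is_hom phi, bijective phi, is_hom psi & is_hom eta] /\
  (forall a, phi (psi a) = psi (phi a)) /\
  (forall a, eta (eta a) = a) /\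
  (forall a, eta (phi a) = phi (eta a)) /\
  (forall a, eta (psi a) = psi a) /\
  (forall a, phi (phi a) = a) /\
  (forall a, psi a = phi (psi a) + psi (psi a)) /\
  (forall a, phi (psi (eta a)) = - psi a).

(* zeta in Aut(X, rho_X), given together with its inverse zetainv. *)
Definition is_autX (X : Type) (op : X -> X -> X) (rho : X -> X) (zeta zetainv : X -> X) : Prop :=
  [/\ cancel zeta zetainv, cancel zetainv zeta,
      forall x y, zeta (op x y) = op (zeta x) (zeta y) &
      forall x, zeta (rho x) = rho (zeta x)].

Definition is_autA (A : zmodType) (phi psi eta theta : A -> A) : Prop :=
  [/\ is_hom theta, bijective theta,
      forall a, theta (phi a) = phi (theta a),
      forall a, theta (psi a) = psi (theta a) &
      forall a, theta (eta a) = eta (theta a)].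

Definition is_Z2 (X : Type) (op : X -> X -> X) (rho : X -> X) (A : zmodType)
    (phi psi eta : A -> A) (sigma : X -> X -> A) : Prop :=
  [/\ forall x y z, - phi (sigma x z) + phi (sigma x y) + sigma (op x y) z
                      - sigma (op x z) (op y z) - psi (sigma y z) = 0,
      forall x y, eta (sigma x y) = sigma (rho x) y &
      forall x y, phi (sigma (op x y) (rho y)) + sigma x y = 0].

Definition is_B2 (X : Type) (op : X -> X -> X) (rho : X -> X) (A : zmodType)
    (phi psi eta : A -> A) (sigma : X -> X -> A) : Prop :=
  exists lambda : X -> A,
    (forall x, eta (lambda x) = lambda (rho x)) /\
    (forall x y, sigma x y = phi (lambda x) - lambda (op x y) + psi (lambda y)).

Definition act_cocycle (X : Type) (A : zmodType) (zetainv : X -> X) (theta : A -> A)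
    (sigma : X -> X -> A) : X -> X -> A :=
  fun x y => theta (sigma (zetainv x) (zetainv y)).

Definition E_op (X : Type) (op : X -> X -> X) (A : zmodType) (phi psi : A -> A)
    (alpha : X -> X -> A) (u v : X * A) : X * A :=
  (op u.1 v.1, phi u.2 + psi v.2 + alpha u.1 v.1).

Definition E_rho (X : Type) (rho : X -> X) (A : zmodType) (eta : A -> A) (u : X * A) : X * A :=
  (rho u.1, eta u.2).

Definition is_E_aut (X : Type) (op : X -> X -> X) (rho : X -> X) (A : zmodType)
    (phi psi eta : A -> A) (alpha : X -> X -> A) (xi : X * A -> X * A) : Prop :=
  [/\ bijective xi,
      forall u v, xi (E_op op phi psi alpha u v) = E_op op phi psi alpha (xi u) (xi v) &
      forall u, xi (E_rho rho eta u) = E_rho rho eta (xi u)].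

(* (zeta, theta) in Im(Gamma): there is xi in Aut_A(E(F,alpha), rho_E) with
   xi (x, s) = (zeta x, lambda x + theta s), i.e. Gamma xi = (zeta, theta). *)
Definition in_Im_Gamma (X : Type) (op : X -> X -> X) (rho : X -> X) (A : zmodType)
    (phi psi eta : A -> A) (alpha : X -> X -> A) (zeta : X -> X) (theta : A -> A) : Prop :=
  exists lambda : X -> A,
    is_E_aut op rho phi psi eta alpha (fun u => (zeta u.1, lambda u.1 + theta u.2)).

Definition same_class (X : Type) (op : X -> X -> X) (rho : X -> X) (A : zmodType)
    (phi psi eta : A -> A) (sigma tau : X -> X -> A) : Prop :=
  is_B2 op rho phi psi eta (fun x y => sigma x y - tau x y).

Definition in_stabilizer (X : Type) (op : X -> X -> X) (rho : X -> X) (A : zmodType)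
    (phi psi eta : A -> A) (alpha : X -> X -> A) (zetainv : X -> X) (theta : A -> A) : Prop :=
  same_class op rho phi psi eta (act_cocycle zetainv theta alpha) alpha.

Definition Lambda_rep (X : Type) (A : zmodType) (alpha : X -> X -> A) (zetainv : X -> X)
    (theta : A -> A) : X -> X -> A :=
  fun x y => alpha x y - act_cocycle zetainv theta alpha x y.

Definition Lambda_zero (X : Type) (op : X -> X -> X) (rho : X -> X) (A : zmodType)
    (phi psi eta : A -> A) (alpha : X -> X -> A) (zetainv : X -> X) (theta : A -> A) : Prop :=
  same_class op rho phi psi eta (Lambda_rep alpha zetainv theta) (fun _ _ => 0).

From mathcomp Require Import all_boot all_order all_algebra.
Set Implicit Arguments. Unset Strict Implicit. Unset Printing Implicit Defensive.
Import GRing.Theory.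
Local Open Scope ring_scope.

(* A map xi (x, s) = (zeta x, lambda x + theta s) of X * A is automatically
   bijective; it preserves the operation of E(F, alpha) exactly when
   theta (alpha x y) - alpha (zeta x) (zeta y) is the coboundary of lambda,
   and commutes with the involution exactly when eta \o lambda = lambda \o rho.
   So (zeta, theta) lies in Im(Gamma) iff theta \o alpha - alpha \o (zeta, zeta)
   is in B^2_SR; precomposing with the automorphism zeta^-1, this says that
   ^(zeta, theta) alpha - alpha is in B^2_SR, i.e. that (zeta, theta) fixes
   [alpha]. The second equality holds because B^2_SR is closed under negation. *)

Section AdditiveMaps.
Context {A : zmodType}.

Lemma is_hom0 {f : A -> A} : is_hom f -> f 0 = 0.
Proof. by move=> hf; apply: (addrI (f 0)); rewrite -hf !addr0. Qed.

Lemma is_homN {f : A -> A} : is_hom f -> forall a, f (- a) = - f a.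
Proof. by move=> hf a; apply: (addrI (f a)); rewrite -hf !subrr is_hom0. Qed.

Lemma sub_eq_add_swap (a b c d e : A) : a - b = c - d + e <-> d + a = c + e + b.
Proof.
split=> [eq_ab | eq_da].
  by rewrite -[a](subrK b) eq_ab -!addrA addrCA addNKr.
by rewrite -[a](addKr d) eq_da addrA addrK [RHS]addrAC addrC.
Qed.

End AdditiveMaps.

Section Coboundaries.
Variables (X : Type) (op : X -> X -> X) (rho : X -> X).
Variables (A : zmodType) (phi psi eta : A -> A).
Hypotheses (hom_phi : is_hom phi) (hom_psi : is_hom psi) (hom_eta : is_hom eta).

Local Notation is_B2 := (is_B2 op rho phi psi eta).

Lemma eq_is_B2 (sigma tau : X -> X -> A) : sigma =2 tau -> is_B2 sigma -> is_B2 tau.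
Proof.
move=> eq_st [lambda [lambda_eta cobound]]; exists lambda; split=> // x y.
by rewrite -eq_st.
Qed.

Lemma is_B2N (sigma : X -> X -> A) : is_B2 sigma -> is_B2 (fun x y => - sigma x y).
Proof.
move=> [lambda [lambda_eta cobound]]; exists (fun x => - lambda x); split=> [x | x y].
  by rewrite (is_homN hom_eta) lambda_eta.
by rewrite cobound (is_homN hom_phi) (is_homN hom_psi) !opprD opprK.
Qed.

Lemma is_B2_oppP (sigma : X -> X -> A) : is_B2 (fun x y => - sigma x y) <-> is_B2 sigma.
Proof.
split=> [/is_B2N | ]; last exact: is_B2N.
by apply: eq_is_B2 => x y; rewrite opprK.
Qed.

Lemma is_B2_comp {zeta : X -> X} {sigma : X -> X -> A} :
  (forall x y, zeta (op x y) = op (zeta x) (zeta y)) ->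
  (forall x, zeta (rho x) = rho (zeta x)) ->
  is_B2 sigma -> is_B2 (fun x y => sigma (zeta x) (zeta y)).
Proof.
move=> zeta_op zeta_rho [lambda [lambda_eta cobound]].
exists (fun x => lambda (zeta x)); split=> [x | x y]; first by rewrite lambda_eta zeta_rho.
by rewrite cobound zeta_op.
Qed.

Lemma is_B2_autP (zeta zetainv : X -> X) (sigma : X -> X -> A) :
  is_autX op rho zeta zetainv ->
  is_B2 (fun x y => sigma (zeta x) (zeta y)) <-> is_B2 sigma.
Proof.
move=> [zetaK zetainvK zeta_op zeta_rho]; split; last exact: is_B2_comp.
have zetainv_op x y : zetainv (op x y) = op (zetainv x) (zetainv y).
  by rewrite -{1}(zetainvK x) -{1}(zetainvK y) -zeta_op zetaK.
have zetainv_rho x : zetainv (rho x) = rho (zetainv x).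
  by rewrite -{1}(zetainvK x) -zeta_rho zetaK.
move=> /(is_B2_comp zetainv_op zetainv_rho); apply: eq_is_B2 => x y.
by rewrite !zetainvK.
Qed.

End Coboundaries.

Definition E_affine (X : Type) (A : zmodType) (zeta : X -> X) (lambda : X -> A)
    (theta : A -> A) (u : X * A) : X * A :=
  (zeta u.1, lambda u.1 + theta u.2).

Section AffineAutomorphisms.
Variables (X : Type) (op : X -> X -> X) (rho : X -> X).
Variables (A : zmodType) (phi psi eta : A -> A) (alpha : X -> X -> A).
Variables (zeta : X -> X) (theta : A -> A).
Hypotheses (hom_phi : is_hom phi) (hom_psi : is_hom psi) (hom_eta : is_hom eta).
Hypotheses (zeta_op : forall x y, zeta (op x y) = op (zeta x) (zeta y))
           (zeta_rho : forall x, zeta (rho x) = rho (zeta x)).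
Hypotheses (hom_theta : is_hom theta) (theta_phi : forall a, theta (phi a) = phi (theta a))
           (theta_psi : forall a, theta (psi a) = psi (theta a))
           (theta_eta : forall a, theta (eta a) = eta (theta a)).

Lemma E_affine_bij (lambda : X -> A) :
  bijective zeta -> bijective theta -> bijective (E_affine zeta lambda theta).
Proof.
move=> [zetainv zetaK zetainvK] [thetainv thetaK thetainvK].
exists (fun u => (zetainv u.1, thetainv (u.2 - lambda (zetainv u.1)))).
  by move=> [x s]; rewrite /E_affine /= zetaK addrC addKr thetaK.
by move=> [x s]; rewrite /E_affine /= zetainvK thetainvK addrC subrK.
Qed.

Lemma E_affine_opP (lambda : X -> A) :
  {morph E_affine zeta lambda theta : u v / E_op op phi psi alpha u v} <->
  (forall x y, theta (alpha x y) - alpha (zeta x) (zeta y)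
               = phi (lambda x) - lambda (op x y) + psi (lambda y)).
Proof.
split=> [morph_op x y | cobound [x a] [y b]].
  have [_] := morph_op (x, 0) (y, 0).
  rewrite (is_hom0 hom_theta) (is_hom0 hom_phi) (is_hom0 hom_psi) !addr0 add0r.
  by move/sub_eq_add_swap.
have {}cobound := iffLR (sub_eq_add_swap _ _ _ _ _) (cobound x y).
rewrite /E_affine /E_op /=; congr pair; first exact: zeta_op.
rewrite !hom_theta theta_phi theta_psi !hom_phi !hom_psi.
by rewrite addrCA cobound [in RHS]addrACA [RHS]addrAC addrC.
Qed.

Lemma E_affine_rhoP (lambda : X -> A) :
  {morph E_affine zeta lambda theta : u / E_rho rho eta u} <->
  (forall x, eta (lambda x) = lambda (rho x)).
Proof.
split=> [morph_rho x | lambda_eta [x s]].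
  have [_] := morph_rho (x, 0).
  by rewrite (is_hom0 hom_eta) (is_hom0 hom_theta) !addr0.
by rewrite /E_affine /E_rho /= zeta_rho hom_eta theta_eta lambda_eta.
Qed.

Lemma in_Im_GammaP :
  bijective zeta -> bijective theta ->
  in_Im_Gamma op rho phi psi eta alpha zeta theta <->
  is_B2 op rho phi psi eta (fun x y => theta (alpha x y) - alpha (zeta x) (zeta y)).
Proof.
move=> bij_zeta bij_theta; split=> [[lambda [_ morph_op morph_rho]] | ].
  by exists lambda; split; [apply/E_affine_rhoP | apply/E_affine_opP].
move=> [lambda [lambda_eta cobound]]; exists lambda; split.
- exact: E_affine_bij.
- exact/E_affine_opP.
- exact/E_affine_rhoP.
Qed.

End AffineAutomorphisms.

Section Stabilizer.
Variables (X : Type) (op : X -> X -> X) (rho : X -> X).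
Variables (A : zmodType) (phi psi eta : A -> A) (alpha : X -> X -> A).
Variables (zeta zetainv : X -> X) (theta : A -> A).
Hypotheses (hom_phi : is_hom phi) (hom_psi : is_hom psi) (hom_eta : is_hom eta).
Hypotheses (zeta_aut : is_autX op rho zeta zetainv)
           (theta_aut : is_autA phi psi eta theta).

Local Notation is_B2 := (is_B2 op rho phi psi eta).
Local Notation in_stabilizer := (in_stabilizer op rho phi psi eta alpha zetainv theta).

Lemma in_stabilizerP :
  in_stabilizer <-> is_B2 (fun x y => theta (alpha x y) - alpha (zeta x) (zeta y)).
Proof.
have [zetaK _ _ _] := zeta_aut.
apply: iff_trans (iff_sym (is_B2_autP phi psi eta _ zeta_aut)) _.
by split; apply: eq_is_B2 => x y; rewrite /act_cocycle !zetaK.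
Qed.

Lemma Im_Gamma_stabilizerP :
  in_Im_Gamma op rho phi psi eta alpha zeta theta <-> in_stabilizer.
Proof.
have [zetaK zetainvK zeta_op zeta_rho] := zeta_aut.
have [hom_theta bij_theta theta_phi theta_psi theta_eta] := theta_aut.
apply: iff_trans (iff_sym in_stabilizerP); apply: in_Im_GammaP => //.
exact: Bijective zetaK zetainvK.
Qed.

Lemma Lambda_zeroP :
  Lambda_zero op rho phi psi eta alpha zetainv theta <-> in_stabilizer.
Proof.
apply: iff_trans (iff_sym (is_B2_oppP op rho hom_phi hom_psi hom_eta _)) _.
by split; apply: eq_is_B2 => x y; rewrite /Lambda_rep subr0 opprB.
Qed.

End Stabilizer.

Theorem proposition6p5
  (X : Type) (op opinv : X -> X -> X) (rho : X -> X)
  (A : zmodType) (phi psi eta : A -> A) (alpha : X -> X -> A) :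
  is_symmetric_rack op opinv rho ->
  is_cc_module phi psi eta ->
  is_Z2 op rho phi psi eta alpha ->
  forall (zeta zetainv : X -> X) (theta : A -> A),
    is_autX op rho zeta zetainv ->
    is_autA phi psi eta theta ->
    (in_Im_Gamma op rho phi psi eta alpha zeta theta <->
       in_stabilizer op rho phi psi eta alpha zetainv theta) /\
    (in_stabilizer op rho phi psi eta alpha zetainv theta <->
       Lambda_zero op rho phi psi eta alpha zetainv theta).
Proof.
move=> _ [[hom_phi _ hom_psi hom_eta] _] _ zeta zetainv theta zeta_aut theta_aut.
split; [exact: Im_Gamma_stabilizerP | apply: iff_sym; exact: Lambda_zeroP].
Qed.
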